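(* Let $X$ be a separable symmetric space on $[0,1]$. Then the following are equivalent: (a) for every $f\in X$ with $\int_0^1f(t)\,dt\ne0$ there exists $\lambda_0\in\mathbb{R}$ with $\|1-\lambda_0f\|_X<1$; (b) $X$ is smooth at the function identically equal to $1$.
   Context: A symmetric space $X$ on $[0,1]$ is a Banach space of (equivalence classes of) real-valued Lebesgue measurable functions on $[0,1]$ such that: (a) if $y\in X$ and $x$ is measurable with $|x|\le|y|$ a.e., then $x\in X$ and $\|x\|_X\le\|y\|_X$; (b) if $x,y$ are equimeasurable and $y\in X$, then $x\in X$ and $\|x\|_X=\|y\|_X$; normalized so that $\|\chi_{[0,1]}\|_X=1$. A Banach space $E$ is smooth at $x_0\in E$ with $\|x_0\|_E=1$ if there is a unique $x^*\in E^*$ with $\|x^*\|_{E^*}=x^*(x_0)=1$. *)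

From HB Require Import structures.
From mathcomp Require Import all_boot all_order all_algebra.
From mathcomp Require Import all_classical all_reals all_analysis.
Set Implicit Arguments. Unset Strict Implicit. Unset Printing Implicit Defensive.
Import Order.TTheory GRing.Theory Num.Theory.
Import numFieldNormedType.Exports.
Local Open Scope classical_set_scope.
Local Open Scope ring_scope.

Section Defs.
Variable R : realType.

Local Notation mu := (@lebesgue_measure R).

Definition I01 : set R := `[0%R, 1%R]%classic.

Definition ae01 (P : R -> Prop) : Prop :=
  mu.-negligible [set t | I01 t /\ ~ P t].

Definition equimeasurable01 (x y : R -> R) : Prop :=
  forall tau : R, 0 < tau ->
    mu [set s | I01 s /\ tau < `|x s|] =
    mu [set s | I01 s /\ tau < `|y s|].

(** X (a set of measurable functions on [0,1], elements identified a.e.)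
    with norm N is a symmetric space on [0,1]. *)
Record symmetric_space (X : set (R -> R)) (N : (R -> R) -> R) : Prop := {
  ss_meas : forall f, X f -> measurable_fun I01 f;
  ss_zero : X (fun _ => 0);
  ss_add : forall f g, X f -> X g -> X (fun t => f t + g t);
  ss_scale : forall (a : R) f, X f -> X (fun t => a * f t);
  ss_norm_ge0 : forall f, X f -> 0 <= N f;
  ss_norm_eq0 : forall f, X f -> (N f = 0 <-> ae01 (fun t => f t = 0));
  ss_norm_triangle : forall f g, X f -> X g -> N (fun t => f t + g t) <= N f + N g;
  ss_norm_scale : forall (a : R) f, X f -> N (fun t => a * f t) = `|a| * N f;
  ss_complete : forall u : nat -> (R -> R), (forall n, X (u n)) ->
    (forall e : R, 0 < e -> exists n0 : nat, forall m n : nat,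
        (n0 <= m)%N -> (n0 <= n)%N -> N (fun t => u m t - u n t) < e) ->
    exists f, X f /\ forall e : R, 0 < e -> exists n0 : nat, forall n : nat,
        (n0 <= n)%N -> N (fun t => u n t - f t) < e;
  ss_ideal : forall x y : R -> R, X y -> measurable_fun I01 x ->
    ae01 (fun t => `|x t| <= `|y t|) -> X x /\ N x <= N y;
  ss_symm : forall x y : R -> R, X y -> measurable_fun I01 x ->
    equimeasurable01 x y -> X x /\ N x = N y;
  ss_one : X (fun _ => 1);
  ss_normalized : N (fun _ => 1) = 1
}.

Definition separable_space (X : set (R -> R)) (N : (R -> R) -> R) : Prop :=
  exists s : nat -> (R -> R), (forall n, X (s n)) /\
    forall f, X f -> forall e : R, 0 < e -> exists n, N (fun t => f t - s n t) < e.

Definition bounded_linear_functional (X : set (R -> R)) (N : (R -> R) -> R)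
    (phi : (R -> R) -> R) : Prop :=
  (forall (a : R) f g, X f -> X g -> phi (fun t => a * f t + g t) = a * phi f + phi g) /\
  (exists C : R, forall f, X f -> `|phi f| <= C * N f).

Definition dual_norm (X : set (R -> R)) (N : (R -> R) -> R)
    (phi : (R -> R) -> R) : R :=
  sup [set `|phi f| | f in [set f | X f /\ N f <= 1]].

Definition norming_at (X : set (R -> R)) (N : (R -> R) -> R)
    (x0 : R -> R) (phi : (R -> R) -> R) : Prop :=
  [/\ bounded_linear_functional X N phi, dual_norm X N phi = 1 & phi x0 = 1].

(** Smoothness at x0 (with ||x0|| = 1): there is a unique norming functional,
    functionals (elements of X^* ) being identified when they agree on X. *)
Definition smooth_at (X : set (R -> R)) (N : (R -> R) -> R) (x0 : R -> R) : Prop :=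
  [/\ N x0 = 1,
      (exists phi, norming_at X N x0 phi) &
      (forall phi psi, norming_at X N x0 phi -> norming_at X N x0 psi ->
         forall f, X f -> phi f = psi f)].
End Defs.

From HB Require Import structures.
From mathcomp Require Import all_boot all_order all_algebra.
From mathcomp Require Import all_classical all_reals all_analysis.
From mathcomp Require Import ring lra zify measurable_realfun.
Import Order.TTheory GRing.Theory Num.Theory.
Import numFieldNormedType.Exports.
Local Open Scope classical_set_scope.
Local Open Scope ring_scope.

Set Implicit Arguments. Unset Strict Implicit. Unset Printing Implicit Defensive.

(** A symmetric space embeds contractively into L^1.  A step function on n
    equal cells has the same norm as each of its n cyclic rotations, and these
    rotations add up to the constant n * (integral of f); so the norm of a step
    function dominates its integral, and general functions are reduced to step
    functions through their level sets.  Hence the integral is a norming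
    functional at 1.  If (a) holds and phi is a norming functional at 1 with
    phi g <> integral of g, then f = g - phi g has nonzero integral and
    phi f = 0, whereas ||1 - lambda f|| < 1 forces lambda * phi f > 0.  If (a)
    fails for f, then ||1 - lambda f|| >= 1 for every lambda, and a Hahn-Banach
    extension of a + b f |-> a is a norming functional at 1 vanishing at f,
    hence different from the integral. *)

Lemma sum_nat_rot (n c : nat) (F : nat -> nat) :
  (\sum_(j < n) F ((c + j) %% n) = \sum_(j < n) F j)%N.
Proof.
case: n => [|n]; first by rewrite !big_ord0.
rewrite [RHS](reindex_inj (addrI (inZp c : 'I_n.+1))).
by apply: eq_bigr => j _; rewrite /= modnDml.
Qed.

Lemma sum_nat_lt (n p : nat) : (\sum_(j < n) (j < p : nat) = minn n p)%N.
Proof.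
elim: n => [|n IH]; first by rewrite big_ord0 min0n.
by rewrite big_ord_recr /= IH; case: ltnP; lia.
Qed.

Lemma sum_nat_rot_lt (n c p : nat) : (p <= n)%N ->
  (\sum_(j < n) ((c + j) %% n < p : nat) = p)%N.
Proof.
by move=> pn; rewrite (sum_nat_rot n c (fun x => (x < p : nat))) sum_nat_lt; lia.
Qed.

Section Layers.
Variables (R : realDomainType) (T : Type).
Implicit Types (A C : nat -> set T) (L : nat) (t : T).

Definition layers A L t : R := \sum_(l < L) \1_(A l) t.

Lemma layers_ge0 A L t : 0 <= layers A L t.
Proof. by apply: sumr_ge0 => l _; rewrite /indic ler0n. Qed.

Lemma layers_le_size A L t : layers A L t <= L%:R.
Proof.
rewrite -[L in leRHS]card_ord -sumr_const; apply: ler_sum => l _.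
by rewrite /indic; case: (_ \in _).
Qed.

Lemma le_layers A C L t : (forall l, A l `<=` C l) -> layers A L t <= layers C L t.
Proof.
move=> AC; apply: ler_sum => l _; rewrite /indic.
by case: (boolP (t \in A l)) => [/set_mem/AC/mem_set -> //|_]; exact: ler0n.
Qed.

Section Nonincreasing.
Variable A : nat -> set T.
Hypothesis nA : nonincreasing_seq A.

Lemma layers_ge L t j : (j < L)%N -> A j t -> j.+1%:R <= layers A L t.
Proof.
move=> jL Ajt; apply: (@le_trans _ _ (\sum_(l < L) (l < j.+1 : nat)%:R)).
  by rewrite -natr_sum sum_nat_lt ler_nat; lia.
apply: ler_sum => l _; rewrite /indic; case: ltnP => //= lj.
by rewrite mem_set //; move/subsetPset: (@nA l j lj); apply.
Qed.

Lemma layers_le L t j : ~ A j t -> layers A L t <= j%:R.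
Proof.
move=> nAjt; apply: (@le_trans _ _ (\sum_(l < L) (l < j : nat)%:R)).
  apply: ler_sum => l _; rewrite /indic; case: ltnP => [_|jl].
    by case: (_ \in _).
  by rewrite memNset //; move/subsetPset: (@nA j l jl) => sub /sub.
by rewrite -natr_sum sum_nat_lt ler_nat geq_minr.
Qed.

Lemma layers_level_set (D : set T) L (tau : R) j : (forall l, A l `<=` D) ->
  j%:R <= tau -> tau < j.+1%:R ->
  [set s | D s /\ tau < `|layers A L s|] = if (j < L)%N then A j else set0.
Proof.
move=> AD jtau tauj; apply/seteqP; split => s /=.
  move=> [_]; rewrite ger0_norm ?layers_ge0 // => tau_lt.
  have Ajs : A j s by apply: contrapT => /(layers_le L); lra.
  case: ltnP => // Lj; have := layers_le_size A L s.
  have : (L%:R : R) <= j%:R by rewrite ler_nat.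
  lra.
case: ltnP => [jL Ajs|_ []]; split; first exact: AD Ajs.
by rewrite ger0_norm ?layers_ge0 //; apply: lt_le_trans tauj (layers_ge jL Ajs).
Qed.

End Nonincreasing.
End Layers.

Section LayersMeasure.
Context d (T : measurableType d) (R : realType).
Variable mu : {measure set T -> \bar R}.
Variables (A : nat -> set T) (L : nat).
Hypothesis mA : forall l, measurable (A l).

Lemma measurable_layers D : measurable_fun D (layers R A L).
Proof.
apply: (@measurable_sum _ _ _ _ _ (index_enum 'I_L) (fun l t => \1_(A l) t)) => l.
exact: measurable_indic.
Qed.

Lemma integral_layers D : measurable D -> (forall l, A l `<=` D) ->
  (\int[mu]_(x in D) (layers R A L x)%:E = \sum_(l < L) mu (A l))%E.
Proof.
move=> mD AD.
transitivity (\int[mu]_(x in D) (\sum_(l < L) (\1_(A l) x : R)%:E))%E.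
  by apply: eq_integral => x _; rewrite /layers sumEFin.
have mf l : measurable_fun D (fun x => (\1_(A l) x : R)%:E).
  by apply/measurable_EFinP; exact: measurable_indic.
have f0 l x : D x -> (0 <= (\1_(A l) x : R)%:E)%E by rewrite lee_fin /indic ler0n.
rewrite ge0_integral_sum //; apply: eq_bigr => l _.
by rewrite integral_indic // setIidl.
Qed.

End LayersMeasure.

Section UnitInterval.
Variable R : realType.
Local Notation mu := (@lebesgue_measure R).
Local Notation I01 := (@I01 R).

Lemma measurable_I01 : measurable I01.
Proof. exact: measurable_itv. Qed.

Lemma lebesgue_measure_I01 : mu I01 = 1%:E.
Proof. by rewrite /I01 lebesgue_measure_itv /= lte_fin ltr01 oppr0 adde0. Qed.

Lemma I01_ge0 t : I01 t -> 0 <= t.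
Proof. by rewrite /I01 /= in_itv /= => /andP[]. Qed.

Lemma I01_le1 t : I01 t -> t <= 1.
Proof. by rewrite /I01 /= in_itv /= => /andP[]. Qed.

Lemma ae01W (P : R -> Prop) : (forall t, I01 t -> P t) -> ae01 P.
Proof.
move=> H; apply: (negligibleS _ (@negligible_set0 _ _ _ mu)).
by move=> t [It nP]; apply: nP; exact: H.
Qed.

Lemma ae01W_neq1 (P : R -> Prop) : (forall t, I01 t -> t != 1 -> P t) -> ae01 P.
Proof.
move=> H; exists [set 1]; split => //; first exact: lebesgue_measure_set1.
by move=> t [It nP] /=; case: (eqVneq t 1) => // t1; case: nP; exact: H.
Qed.

Lemma measure_sub01 (A : set R) : measurable A -> A `<=` I01 ->
  mu A = (fine (mu A))%:E /\ 0 <= fine (mu A) <= 1.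
Proof.
move=> mA AI.
have le1 : (mu A <= 1%:E)%E.
  by rewrite -lebesgue_measure_I01 le_measure ?inE //; exact: measurable_I01.
have E : mu A = (fine (mu A))%:E.
  by rewrite fineK // ge0_fin_numE ?measure_ge0 // (le_lt_trans le1 (ltry _)).
by split => //; rewrite -!lee_fin -E measure_ge0.
Qed.

Definition cells (n : nat) (S : pred nat) : set R :=
  [set t | I01 t /\ (Num.trunc (n%:R * t) < n)%N /\ S (Num.trunc (n%:R * t))].

Lemma cells_sub01 n S : cells n S `<=` I01.
Proof. by move=> t []. Qed.

Lemma cells_bigcup n S : (0 < n)%N ->
  cells n S = \bigcup_(i < n)
    (if S i then `[i%:R / n%:R, i.+1%:R / n%:R[%classic else set0).
Proof.
move=> n0; have n0' : (0 : R) < n%:R by rewrite ltr0n.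
have cellE (t : R) i : (i%:R / n%:R <= t < i.+1%:R / n%:R) = (i%:R <= n%:R * t < i.+1%:R).
  by rewrite ler_pdivrMr // ltr_pdivlMr // [t * _]mulrC.
apply/seteqP; split => t.
  move=> [It [tn St]]; exists (Num.trunc (n%:R * t)) => //.
  by rewrite St /= in_itv /= cellE truncn_itv // mulr_ge0 ?ler0n ?I01_ge0.
move=> [i /= ilt]; case: ifP => // Si; rewrite /= in_itv /= => /[dup] Ht.
have t0 : 0 <= t by apply: le_trans (andP Ht).1; rewrite divr_ge0 ?ler0n.
rewrite cellE => /truncn_def trunc_i; rewrite /cells /= trunc_i; split => //.
rewrite /I01 /= in_itv /= t0 /=; apply: (le_trans (ltW (andP Ht).2)).
by rewrite ler_pdivrMr // mul1r ler_nat.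
Qed.

Lemma measurable_cells n S : (0 < n)%N -> measurable (cells n S).
Proof.
move=> n0; rewrite cells_bigcup // bigcup_mkord; apply: bigsetU_measurable => i _.
by case: (S i).
Qed.

Lemma measure_cells n S : (0 < n)%N ->
  mu (cells n S) = ((\sum_(i < n) S i)%:R / n%:R)%:E.
Proof.
move=> n0; have n0' : (0 : R) < n%:R by rewrite ltr0n.
rewrite cells_bigcup // bigcup_mkord measure_bigsetU_ord.
- rewrite natr_sum mulr_suml -sumEFin; apply: eq_bigr => i _.
  case: (S i) => /=; last by rewrite measure0 mul0r.
  rewrite lebesgue_measure_itv /= lte_fin ltr_pM2r ?invr_gt0 // ltr_nat ltnSn.
  by rewrite -EFinD -mulrBl -natrB // subSnn.
- by move=> i; case: (S i).
- move=> i j _ _ [t []]; case: (S i); case: (S j) => //=.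
  rewrite !in_itv /= => Hj Hi; apply: val_inj => /=.
  have t0 : 0 <= t by apply: le_trans (andP Hi).1; rewrite divr_ge0 ?ler0n.
  rewrite !ler_pdivrMr // !ltr_pdivlMr // ![t * _]mulrC in Hi Hj.
  by rewrite -(truncn_def Hi) -(truncn_def Hj).
Qed.

Definition rot_cells (n : nat) (p : nat -> nat) (j l : nat) : set R :=
  cells n (fun i => (i + j) %% n < p l)%N.

Lemma measure_rot_cells n p j l : (0 < n)%N -> (p l <= n)%N ->
  mu (rot_cells n p j l) = ((p l)%:R / n%:R)%:E.
Proof.
move=> n0 pn; rewrite measure_cells //.
by under eq_bigr do rewrite addnC; rewrite sum_nat_rot_lt.
Qed.

Lemma rot_cells_nonincreasing n p j : nonincreasing_seq p ->
  nonincreasing_seq (rot_cells n p j).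
Proof.
move=> np l l' ll'; apply/subsetPset => t [It [tn ltp]]; split => //; split => //.
exact: leq_trans ltp (np _ _ ll').
Qed.

(* The point [1] lies in no cell. *)
Lemma sum_layers_rot_cells n p L t : (0 < n)%N -> (forall l, p l <= n)%N ->
  I01 t -> t != 1 ->
  \sum_(j < n) layers R (rot_cells n p j) L t = (\sum_(l < L) p l)%:R.
Proof.
move=> n0 pn It t1; have tlt1 : t < 1 by rewrite lt_neqAle t1 I01_le1.
have kn : (Num.trunc (n%:R * t) < n)%N.
  rewrite truncn_lt_nat ?mulr_ge0 ?ler0n ?I01_ge0 //.
  by rewrite -{2}(mulr1 n%:R) ltr_pM2l ?ltr0n.
have memE j l : \1_(rot_cells n p j l) t =
    ((Num.trunc (n%:R * t) + j) %% n < p l)%N%:R :> R.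
  rewrite /indic; suff -> : (t \in rot_cells n p j l) =
    ((Num.trunc (n%:R * t) + j) %% n < p l)%N by [].
  apply/idP/idP => [/set_mem [_ [_ ->]] //|H].
  by apply/mem_set; split => //; split.
rewrite /layers; under eq_bigr do under eq_bigr do rewrite memE.
by rewrite exchange_big natr_sum; apply: eq_bigr => l _; rewrite -natr_sum sum_nat_rot_lt.
Qed.

Definition superlevel (h : R -> R) (k : nat) : set R := [set t | I01 t /\ k%:R <= h t].

Lemma superlevel_sub01 h k : superlevel h k `<=` I01.
Proof. by move=> t []. Qed.

Lemma measurable_superlevel h k : measurable_fun I01 h -> measurable (superlevel h k).
Proof.
move=> mh; have -> : superlevel h k = I01 `&` h @^-1` `[k%:R, +oo[.
  by apply/seteqP; split => t /=; rewrite in_itv /= andbT.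
by apply: mh; [exact: measurable_I01 | exact: measurable_itv].
Qed.

Lemma superlevel_nonincreasing h : nonincreasing_seq (superlevel h).
Proof.
move=> i j ij; apply/subsetPset => t [It le_j]; split => //.
by apply: le_trans le_j; rewrite ler_nat.
Qed.

Lemma le_layers_superlevel h K t : I01 t -> 0 <= h t -> h t < K%:R ->
  h t <= layers R (superlevel h) K t.
Proof.
move=> It h0 hK; have /andP[lo hi] := truncn_itv h0.
apply: le_trans (ltW hi) (layers_ge R (superlevel_nonincreasing h) _ _) => //.
by rewrite truncn_lt_nat.
Qed.

Lemma layers_superlevelS_le h K t : I01 t -> 0 <= h t ->
  layers R (fun l => superlevel h l.+1) K t <= h t.
Proof.
move=> It h0; have /andP[lo hi] := truncn_itv h0.
have nS : nonincreasing_seq (fun l => superlevel h l.+1).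
  by move=> i j ij; exact: superlevel_nonincreasing.
by apply: le_trans (layers_le R nS K _) lo => -[_]; rewrite leNgt hi.
Qed.

Lemma Rintegral_I01_one : Rintegral mu I01 (fun _ => 1) = 1.
Proof.
rewrite Rintegral_cst ?mul1r; last exact: measurable_I01.
exact: (f_equal fine lebesgue_measure_I01).
Qed.

End UnitInterval.

Section SymmetricSpace.
Variable R : realType.
Local Notation mu := (@lebesgue_measure R).
Local Notation I01 := (@I01 R).
Variables (X : set (R -> R)) (N : (R -> R) -> R).
Hypothesis HX : symmetric_space X N.

Lemma X_cst (c : R) : X (fun _ => c).
Proof. by have := ss_scale HX c (ss_one HX); under eq_fun do rewrite mulr1. Qed.

Lemma N_cst (c : R) : N (fun _ => c) = `|c|.
Proof.
have := ss_norm_scale HX c (ss_one HX); under eq_fun do rewrite mulr1.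
by rewrite (ss_normalized HX) mulr1.
Qed.

Lemma X_sub x y : X x -> X y -> X (fun t => x t - y t).
Proof.
move=> Xx Xy; have := ss_add HX Xx (ss_scale HX (-1) Xy).
by under eq_fun do rewrite mulN1r.
Qed.

Lemma X_le_cst (f : R -> R) (c : R) : measurable_fun I01 f ->
  (forall t, I01 t -> `|f t| <= c) -> X f /\ N f <= c.
Proof.
move=> mf fc; have c0 : 0 <= c.
  by apply: le_trans (fc 0 _) => //; rewrite /I01 /= in_itv /= lexx ler01.
have [] := ss_ideal HX (X_cst c) mf (ae01W _).
  by move=> t It /=; rewrite (ger0_norm c0); exact: fc.
by rewrite N_cst ger0_norm.
Qed.

Lemma X_sum (F : nat -> R -> R) (k : nat) : (forall j, X (F j)) ->
  X (fun t => \sum_(j < k) F j t) /\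
  N (fun t => \sum_(j < k) F j t) <= \sum_(j < k) N (F j).
Proof.
move=> XF; elim: k => [|k [Xsum Nsum]].
  under eq_fun do rewrite big_ord0.
  by rewrite big_ord0 N_cst normr0; split => //; exact: X_cst.
under eq_fun do rewrite big_ord_recr /=.
split; first exact: (ss_add HX Xsum (XF k)).
by apply: le_trans (ss_norm_triangle HX Xsum (XF k)) _; rewrite big_ord_recr lerD2r.
Qed.

Lemma X_layers (A : nat -> set R) L : (forall l, measurable (A l)) -> X (layers R A L).
Proof.
move=> mA; apply: (X_le_cst (c := L%:R) (measurable_layers (R := R) L mA (D := I01)) _).1.
by move=> t _; rewrite ger0_norm ?layers_ge0 // layers_le_size.
Qed.

Lemma N_layers_eq (A C : nat -> set R) L :
  nonincreasing_seq A -> nonincreasing_seq C ->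
  (forall l, measurable (A l)) -> (forall l, measurable (C l)) ->
  (forall l, A l `<=` I01) -> (forall l, C l `<=` I01) ->
  (forall l, (l < L)%N -> mu (A l) = mu (C l)) ->
  N (layers R A L) = N (layers R C L).
Proof.
move=> nA nC mA mC AI CI AC.
suff E : equimeasurable01 (layers R A L) (layers R C L).
  exact: (ss_symm HX (X_layers L mC) (measurable_layers (R := R) L mA (D := I01)) E).2.
move=> tau tau0; have /andP[tau_ge tau_lt] := truncn_itv (ltW tau0).
rewrite (layers_level_set nA L AI tau_ge tau_lt) (layers_level_set nC L CI tau_ge tau_lt).
by case: ifP => // /AC.
Qed.

Lemma sum_le_norm_rot_cells n p L : (0 < n)%N -> (forall l, p l <= n)%N ->
  nonincreasing_seq p ->
  (\sum_(l < L) p l)%:R <= n%:R * N (layers R (rot_cells n p 0) L).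
Proof.
move=> n0 pn np.
have mE j l : measurable (rot_cells n p j l : set R) by exact: measurable_cells.
have EI j l : rot_cells n p j l `<=` I01 by exact: cells_sub01.
have NE j : N (layers R (rot_cells n p j) L) = N (layers R (rot_cells n p 0) L).
  apply: N_layers_eq => //; try exact: rot_cells_nonincreasing.
  by move=> l _; rewrite !measure_rot_cells.
have [Xsum Nsum] := X_sum n (fun j => X_layers L (mE j)).
have : N (fun _ => (\sum_(l < L) p l)%:R) <=
       N (fun t => \sum_(j < n) layers R (rot_cells n p j) L t).
  apply: (ss_ideal HX Xsum (measurable_cst _) _).2.
  by apply: ae01W_neq1 => t It t1; rewrite sum_layers_rot_cells.
rewrite N_cst ger0_norm // => /le_trans; apply.
apply: le_trans Nsum _.
by rewrite (eq_bigr _ (fun (j : 'I_n) _ => NE j)) sumr_const card_ord mulr_natl.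
Qed.

Lemma sum_le_norm_layers_itv (m : nat -> R) L : nonincreasing_seq m ->
  (forall l, 0 <= m l <= 1) ->
  \sum_(l < L) m l <= N (layers R (fun l => `[0, m l]%classic) L).
Proof.
move=> nm m01; set C := fun l => `[0, m l]%classic; apply/ler_addgt0Pr => e e0.
pose n := (Num.trunc (L%:R / e)).+1.
have n0 : (0 : R) < n%:R by rewrite ltr0n.
have Ln : L%:R / n%:R <= e.
  by rewrite ler_pdivrMr // mulrC -ler_pdivrMr // ltW // truncnS_gt.
pose p l := Num.trunc (n%:R * m l).
have pn l : (p l <= n)%N.
  rewrite /p truncn_le_nat; apply: (@le_lt_trans _ _ n%:R); last by rewrite ltr_nat.
  by rewrite ler_piMr ?ler0n //; case/andP: (m01 l).
have np : nonincreasing_seq p.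
  by move=> i j ij; apply: le_truncn; rewrite ler_pM2l // nm.
have EC l : rot_cells n p 0 l `<=` C l.
  move=> t [It [tn ltp]]; rewrite addn0 modn_small // in ltp.
  rewrite /C /= in_itv /= I01_ge0 //=.
  have pm : (p l)%:R <= n%:R * m l.
    by rewrite truncn_le mulr_ge0 ?ler0n //; case/andP: (m01 l).
  have : n%:R * t < n%:R * m l.
    by apply: lt_le_trans pm; rewrite -truncn_lt_nat // mulr_ge0 ?ler0n ?I01_ge0.
  by rewrite ltr_pM2l // => /ltW.
have NEC : N (layers R (rot_cells n p 0) L) <= N (layers R C L).
  have XC : X (layers R C L) := X_layers L (fun l => measurable_itv _).
  apply: (ss_ideal HX XC (measurable_layers (R := R) L _ (D := I01)) _).2.
    by move=> l; exact: measurable_cells.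
  apply: ae01W => t _; rewrite !ger0_norm ?layers_ge0 //; exact: le_layers.
have := sum_le_norm_rot_cells L (ltn0Sn _) pn np.
rewrite -ler_pdivrMl // => /le_trans /(_ NEC) sum_p.
apply: (@le_trans _ _ (\sum_(l < L) ((p l)%:R + 1) / n%:R)).
  apply: ler_sum => l _; rewrite ler_pdivlMr // mulrC ltW //.
  by rewrite natr1 truncnS_gt.
rewrite -mulr_suml big_split /= sumr_const card_ord -natr_sum mulrDl.
by rewrite lerD // mulrC.
Qed.

Lemma sum_measure_le_norm_layers (B : nat -> set R) L : nonincreasing_seq B ->
  (forall l, measurable (B l)) -> (forall l, B l `<=` I01) ->
  \sum_(l < L) fine (mu (B l)) <= N (layers R B L).
Proof.
move=> nB mB BI; pose m l := fine (mu (B l)).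
have muB l : mu (B l) = (m l)%:E := (measure_sub01 (mB l) (BI l)).1.
have m01 l : 0 <= m l <= 1 := (measure_sub01 (mB l) (BI l)).2.
have nm : nonincreasing_seq m.
  move=> i j ij; rewrite -lee_fin -!muB.
  apply: le_measure; rewrite ?inE; [exact: mB|exact: mB|apply/subsetPset; exact: nB].
have nC : nonincreasing_seq (fun l => `[0, m l]%classic : set R).
  move=> i j ij; apply/subsetPset; apply: subset_itvl; rewrite bnd_simp.
  exact: nm.
have CI l : `[0, m l]%classic `<=` I01.
  by apply: subset_itvl; rewrite bnd_simp; case/andP: (m01 l).
rewrite (N_layers_eq nB nC mB (fun l => measurable_itv _) BI CI).
  exact: sum_le_norm_layers_itv.
move=> l _; rewrite muB lebesgue_measure_itv /= lte_fin.
by case: ltgtP (andP (m01 l)).1 => // [_ _|<- _]; rewrite ?oppr0 ?adde0.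
Qed.

Lemma sum_measure_superlevel_le (h : R -> R) K : measurable_fun I01 h ->
  (forall t, I01 t -> 0 <= h t) -> X h ->
  \sum_(k < K.+1) fine (mu (superlevel h k)) <= 1 + N h.
Proof.
move=> mh h0 Xh; rewrite big_ord_recl; apply: lerD.
  by case/andP: (measure_sub01 (measurable_superlevel 0 mh) (@superlevel_sub01 _ h 0)).2.
have nS : nonincreasing_seq (fun l => superlevel h l.+1).
  by move=> i j ij; exact: superlevel_nonincreasing.
have mS l : measurable (superlevel h l.+1) by exact: measurable_superlevel.
apply: (@le_trans _ _ (N (layers R (fun l => superlevel h l.+1) K))).
  by apply: sum_measure_le_norm_layers => // l; exact: superlevel_sub01.
apply: (ss_ideal HX Xh (measurable_layers (R := R) K mS (D := I01)) _).2.
apply: ae01W => t It; rewrite !ger0_norm ?layers_ge0 ?h0 //.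
exact: layers_superlevelS_le (h0 t It).
Qed.

Lemma integral_le_norm_add_inv (g : R -> R) (c : R) (M : nat) : (0 < M)%N ->
  measurable_fun I01 g -> (forall t, I01 t -> 0 <= g t <= c) -> X g ->
  (\int[mu]_(x in I01) (g x)%:E <= (N g + M%:R^-1)%:E)%E.
Proof.
move=> M0 mg g0c Xg; have M0' : (0 : R) < M%:R by rewrite ltr0n.
pose h t := M%:R * g t; pose B := superlevel h; pose K := Num.trunc (M%:R * c).
have h0 t : I01 t -> 0 <= h t.
  by move=> It; rewrite mulr_ge0 ?ler0n ?(andP (g0c t It)).1.
have mh : measurable_fun I01 h by exact: measurable_funM.
have mB k : measurable (B k) by exact: measurable_superlevel.
have sumB : \sum_(k < K.+1) fine (mu (B k)) <= 1 + M%:R * N g.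
  rewrite -[M%:R in leRHS]ger0_norm ?ler0n // -(ss_norm_scale HX _ Xg).
  exact: sum_measure_superlevel_le mh h0 (ss_scale HX _ Xg).
apply: (@le_trans _ _ (\int[mu]_(x in I01) ((M%:R^-1)%:E * (layers R B K.+1 x)%:E))%E).
  apply: ge0_le_integral.
  - exact: measurable_I01.
  - by move=> x Ix; rewrite lee_fin (andP (g0c x Ix)).1.
  - by apply/measurable_EFinP.
  - by apply/measurable_EFinP; apply: measurable_funM => //; exact: measurable_layers.
  move=> x Ix; rewrite -EFinM lee_fin ler_pdivlMl //.
  apply: (le_layers_superlevel (h := h)) => //; first exact: h0.
  by apply: le_lt_trans (truncnS_gt _); rewrite ler_pM2l // (andP (g0c x Ix)).2.
rewrite ge0_integralZl_EFin ?invr_ge0 ?ler0n //; last first.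
  - by apply/measurable_EFinP; exact: measurable_layers.
  - by move=> x _; rewrite lee_fin layers_ge0.
  - exact: measurable_I01.
rewrite integral_layers //; [|exact: measurable_I01|exact: superlevel_sub01].
have muB k : mu (B k) = (fine (mu (B k)))%:E.
  exact: (measure_sub01 (mB k) (@superlevel_sub01 _ h k)).1.
rewrite (eq_bigr _ (fun (k : 'I_K.+1) _ => muB k)).
rewrite sumEFin -EFinM lee_fin; apply: le_trans (ler_wpM2l _ sumB) _.
  by rewrite invr_ge0 ler0n.
by rewrite mulrDr mulr1 mulrA mulVf ?mul1r ?lt0r_neq0 // addrC.
Qed.

Lemma integral_le_norm_bounded (g : R -> R) (c : R) :
  measurable_fun I01 g -> (forall t, I01 t -> 0 <= g t <= c) -> X g ->
  (\int[mu]_(x in I01) (g x)%:E <= (N g)%:E)%E.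
Proof.
move=> mg g0c Xg; apply/lee_addgt0Pr => e e0.
apply: le_trans (integral_le_norm_add_inv (M := (Num.trunc e^-1).+1) _ mg g0c Xg) _ => //.
rewrite -EFinD lee_fin lerD2l -[leRHS]invrK lef_pV2 ?posrE ?invr_gt0 ?ltr0n //.
exact: ltW (truncnS_gt _).
Qed.

Import HBNNSimple.

Lemma integral_abs_le_norm (f : R -> R) : X f ->
  (\int[mu]_(x in I01) `|f x|%:E <= (N f)%:E)%E.
Proof.
move=> Xf; rewrite ge0_integralE; last by move=> x _; rewrite lee_fin.
apply: ge_ereal_sup => _ [h /= h_le <-].
have h0 x : ~ I01 x -> h x = 0.
  move=> nx; apply/eqP; rewrite eq_le fun_ge0 andbT -lee_fin.
  by have := h_le x; rewrite /patch memNset.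
have h_le_f x : I01 x -> h x <= `|f x|.
  by move=> Ix; have := h_le x; rewrite /patch mem_set // lee_fin.
rewrite -integralT_nnsfun.
have -> : (\int[mu]_x (h x)%:E)%E = (\int[mu]_(x in I01) (h x)%:E)%E.
  rewrite [RHS]integral_mkcond; apply: eq_integral => x _; rewrite /patch.
  by case: ifP => // /negP nx; rewrite h0 // => /mem_set.
have mh : measurable_fun I01 h := measurable_funTS (measurable_funPT h).
have [Xh Nh] : X h /\ N h <= N f.
  apply: (ss_ideal HX Xf mh); apply: ae01W => t It.
  by rewrite ger0_norm ?fun_ge0 // h_le_f.
have [c [_ hc]] := simple_bounded h.
apply: le_trans (integral_le_norm_bounded (c := c + 1) mh _ Xh) _.
  move=> t _; rewrite fun_ge0 /=; apply: le_trans (ler_norm _) _.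
  by apply: (hc (c + 1)) => //; rewrite ltrDl.
by rewrite lee_fin.
Qed.

Lemma integrable_X f : X f -> mu.-integrable I01 (EFin \o f).
Proof.
move=> Xf; apply/integrableP; split; first by apply/measurable_EFinP; exact: (ss_meas HX).
exact: le_lt_trans (integral_abs_le_norm Xf) (ltry _).
Qed.

Lemma abs_Rintegral_le_norm f : X f -> `|Rintegral mu I01 f| <= N f.
Proof.
move=> Xf; have := @le_normr_Rintegral _ _ _ mu _ f (@measurable_I01 R) (integrable_X Xf).
move/le_trans; apply.
rewrite /Rintegral -lee_fin fineK ?integral_abs_le_norm //.
rewrite ge0_fin_numE; last by apply: integral_ge0 => x _; rewrite lee_fin.
exact: le_lt_trans (integral_abs_le_norm Xf) (ltry _).
Qed.

Lemma Rintegral_linear (a : R) f g : X f -> X g ->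
  Rintegral mu I01 (fun t => a * f t + g t) =
  a * Rintegral mu I01 f + Rintegral mu I01 g.
Proof.
move=> Xf Xg.
rewrite (@RintegralD _ _ _ mu _ _ g (@measurable_I01 R)
  (integrable_X (ss_scale HX a Xf)) (integrable_X Xg)).
by rewrite (@RintegralZl _ _ _ mu _ f a (@measurable_I01 R) (integrable_X Xf)).
Qed.

End SymmetricSpace.

Section Norming.
Variable R : realType.
Local Notation mu := (@lebesgue_measure R).
Local Notation I01 := (@I01 R).
Variables (X : set (R -> R)) (N : (R -> R) -> R).
Hypothesis HX : symmetric_space X N.

Lemma abs_le_dual_norm (phi : (R -> R) -> R) f :
  bounded_linear_functional X N phi -> X f -> N f <= 1 ->
  `|phi f| <= dual_norm X N phi.
Proof.
move=> [_ [C HC]] Xf Nf1; apply: ub_le_sup; last by exists f.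
exists `|C| => _ [h [Xh Nh] <-]; apply: le_trans (HC h Xh) _.
apply: le_trans (ler_wpM2r (ss_norm_ge0 HX Xh) (ler_norm C)) _.
by rewrite -[leRHS]mulr1 ler_wpM2l.
Qed.

Lemma dual_norm_le1 (phi : (R -> R) -> R) :
  (forall f, X f -> `|phi f| <= N f) -> dual_norm X N phi <= 1.
Proof.
move=> le_N; apply: ge_sup.
  exists `|phi (fun _ => 1)|, (fun _ => 1) => //.
  by split; [exact: ss_one HX|rewrite (ss_normalized HX)].
by move=> _ [f [Xf Nf] <-]; exact: le_trans (le_N f Xf) Nf.
Qed.

Lemma norming_at_oneP (phi : (R -> R) -> R) :
  norming_at X N (fun _ => 1) phi <->
  [/\ forall (a : R) f g, X f -> X g ->
        phi (fun t => a * f t + g t) = a * phi f + phi g,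
      forall f, X f -> `|phi f| <= N f
    & phi (fun _ => 1) = 1].
Proof.
split=> [[[lin [C HC]] dn phi1]|[lin le_N phi1]]; last first.
  have Bphi : bounded_linear_functional X N phi.
    by split=> //; exists 1 => f Xf; rewrite mul1r le_N.
  split=> //; apply/le_anti; rewrite dual_norm_le1 // -[leLHS]normr1 -phi1.
  by rewrite abs_le_dual_norm ?(ss_normalized HX) //; exact: ss_one HX.
split=> // f Xf; have X0 := X_cst HX 0.
have phiZ a : phi (fun t => a * f t) = a * phi f.
  have phi0 : phi (fun _ => 0) = 0.
    by have := lin 1 _ _ X0 X0; under eq_fun do rewrite mul1r addr0; rewrite mul1r; lra.
  by have := lin a _ _ Xf X0; under eq_fun do rewrite addr0; rewrite phi0 addr0.
have [Nf0|Nf_neq0] := eqVneq (N f) 0; first by have := HC f Xf; rewrite Nf0 mulr0.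
have Nf_gt0 : 0 < N f by rewrite lt0r Nf_neq0 (ss_norm_ge0 HX Xf).
have Nf1 : N (fun t => (N f)^-1 * f t) <= 1.
  by rewrite (ss_norm_scale HX _ Xf) gtr0_norm ?invr_gt0 // mulVf.
have := abs_le_dual_norm (conj lin (ex_intro _ C HC)) (ss_scale HX _ Xf) Nf1.
rewrite dn phiZ normrM gtr0_norm ?invr_gt0 //.
by rewrite mulrC ler_pdivrMr // mul1r.
Qed.

Lemma Rintegral_norming : norming_at X N (fun _ => 1) (Rintegral mu I01).
Proof.
apply/norming_at_oneP; split; last exact: Rintegral_I01_one.
- by move=> a f g Xf Xg; exact (Rintegral_linear HX a Xf Xg).
- by move=> f Xf; exact (abs_Rintegral_le_norm HX Xf).
Qed.

Lemma norming_at_one_sign (phi : (R -> R) -> R) f (lambda : R) :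
  norming_at X N (fun _ => 1) phi -> X f ->
  N (fun t => 1 - lambda * f t) < 1 -> 0 < lambda * phi f.
Proof.
case/norming_at_oneP => lin le_N phi1 Xf.
have -> : (fun t => 1 - lambda * f t) = (fun t => - lambda * f t + 1).
  by apply/funext => t; rewrite mulNr addrC.
move=> lt1; have := le_N _ (ss_add HX (ss_scale HX (- lambda) Xf) (ss_one HX)).
rewrite lin ?phi1; [|exact: Xf|exact: ss_one HX] => le_N1.
have := ler_norm (- lambda * phi f + 1); rewrite !mulNr in le_N1 *; lra.
Qed.

Lemma norming_at_one_eq_Rintegral (phi : (R -> R) -> R) :
  (forall f, X f -> Rintegral mu I01 f != 0 ->
     exists lambda : R, N (fun t => 1 - lambda * f t) < 1) ->
  norming_at X N (fun _ => 1) phi -> forall g, X g -> phi g = Rintegral mu I01 g.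
Proof.
move=> near1 Nphi g Xg; have [lin _ phi1] := (norming_at_oneP phi).1 Nphi.
apply/eqP; apply: contraT => neq.
pose f t := - phi g * 1 + g t.
have Xf : X f := ss_add HX (ss_scale HX _ (ss_one HX)) Xg.
have phi_f : phi f = 0 by rewrite lin ?phi1 ?mulr1 ?addNr //; exact: ss_one HX.
have int_f : Rintegral mu I01 f != 0.
  rewrite (Rintegral_linear HX _ (ss_one HX) Xg) Rintegral_I01_one mulr1 addrC subr_eq0.
  by rewrite eq_sym.
have [lambda lt1] := near1 f Xf int_f.
by have := norming_at_one_sign Nphi Xf lt1; rewrite phi_f mulr0 ltxx.
Qed.

End Norming.

Section Graphs.
Variable R : realType.
Variables (X : set (R -> R)) (N : (R -> R) -> R).
Hypothesis HX : symmetric_space X N.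
Implicit Types (G : set ((R -> R) * R)) (x y z : R -> R) (v w c : R).

Definition dominated_graph G := forall x v, G (x, v) -> X x /\ v <= N x.

Definition linear_graph G := forall (a : R) x v y w,
  G (x, v) -> G (y, w) -> G ((fun t => a * x t + y t), a * v + w).

Definition graph_ext G z c : set ((R -> R) * R) :=
  [set p | exists y v (s : R), G (y, v) /\ p = ((fun t => y t + s * z t), v + s * c)].

Section DominatedLinear.
Variable G : set ((R -> R) * R).
Hypotheses (domG : dominated_graph G) (linG : linear_graph G).
Hypothesis G0 : G ((fun _ => 0), 0).

Lemma graphZ (a : R) x v : G (x, v) -> G ((fun t => a * x t), a * v).
Proof.
move=> Gxv; have := linG a Gxv G0; rewrite addr0.
by under eq_fun do rewrite addr0.
Qed.

Lemma graph_abs_le x v : G (x, v) -> `|v| <= N x.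
Proof.
move=> Gxv; have [Xx le_v] := domG Gxv; rewrite ler_norml le_v andbT.
have [_] := domG (graphZ (-1) Gxv).
by rewrite (ss_norm_scale HX _ Xx) normrN normr1 mul1r mulN1r lerNl.
Qed.

Lemma graph_functional x v w : G (x, v) -> G (x, w) -> v = w.
Proof.
move=> Gxv Gxw; have := graph_abs_le (linG (-1) Gxv Gxw).
have -> : (fun t => -1 * x t + x t) = (fun _ => 0).
  by apply/funext => t; rewrite mulN1r addNr.
by rewrite (N_cst HX) normr0 normr_le0 mulN1r addrC subr_eq0 => /eqP.
Qed.

Lemma graph_ext_bound z : X z -> exists c, forall y v, G (y, v) ->
  v + c <= N (fun t => y t + z t) /\ v - c <= N (fun t => y t - z t).
Proof.
move=> Xz.
pose S := [set r | exists y w, G (y, w) /\ r = w - N (fun t => y t - z t)].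
have S_le y v : G (y, v) -> ubound S (N (fun t => y t + z t) - v).
  move=> Gyv _ [y' [w [Gyw ->]]]; rewrite lerBlDr addrAC lerBrDr [leRHS]addrC.
  have [Xy le_v] := domG Gyv; have [Xy' _] := domG Gyw.
  have [_] := domG (linG 1 Gyw Gyv); rewrite mul1r => /le_trans; apply.
  have -> : (fun t => 1 * y' t + y t) =
            (fun t => (fun t => y' t - z t) t + (fun t => y t + z t) t).
    by apply/funext => t; rewrite mul1r addrACA addNr addr0.
  exact: (ss_norm_triangle HX (X_sub HX Xy' Xz) (ss_add HX Xy Xz)).
have S0 : S !=set0 by exists (0 - N (fun t => 0 - z t)), (fun _ => 0), 0.
have S_ub : has_ubound S by exists (N (fun t => 0 + z t) - 0); exact: S_le G0.
exists (sup S) => y v Gyv; split.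
  by rewrite -lerBrDl; apply: ge_sup S0 (S_le _ _ Gyv).
by rewrite lerBlDr -lerBlDl; apply: ub_le_sup => //; exists y, v.
Qed.

Lemma sub_graph_ext z c : G `<=` graph_ext G z c.
Proof.
move=> [y v] Gyv; exists y, v, 0; split => //.
by rewrite mul0r addr0; congr pair; apply/funext => t; rewrite mul0r addr0.
Qed.

Lemma graph_ext_point z c : graph_ext G z c (z, c).
Proof.
exists (fun _ => 0), 0, 1; split => //; rewrite mul1r add0r.
by congr pair; apply/funext => t; rewrite mul1r add0r.
Qed.

Lemma graph_ext_linear z c : linear_graph (graph_ext G z c).
Proof.
move=> a _ _ _ _ [y1 [v1 [s1 [G1 [-> ->]]]]] [y2 [v2 [s2 [G2 [-> ->]]]]].
exists (fun t => a * y1 t + y2 t), (a * v1 + v2), (a * s1 + s2); split; first exact: linG.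
by congr pair; [apply/funext => t|]; ring.
Qed.

Lemma graph_ext_dominated z c : X z ->
  (forall y v, G (y, v) ->
     v + c <= N (fun t => y t + z t) /\ v - c <= N (fun t => y t - z t)) ->
  dominated_graph (graph_ext G z c).
Proof.
move=> Xz bound _ _ [y [v [s [Gyv [-> ->]]]]]; have [Xy le_v] := domG Gyv.
split; first exact (ss_add HX Xy (ss_scale HX s Xz)).
have NZ (r : R) h : 0 < r -> X h -> N (fun t => r * h t) = r * N h.
  by move=> r0 Xh; rewrite (ss_norm_scale HX _ Xh) gtr0_norm.
have [s_lt0|s_gt0|->] := ltgtP s 0.
- have r0 : 0 < - s by rewrite oppr_gt0.
  have -> : (fun t => y t + s * z t) = (fun t => - s * ((- s)^-1 * y t - z t)).
    by apply/funext => t; rewrite mulrBr mulrA mulfV ?lt0r_neq0 // mul1r mulNr opprK.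
  rewrite NZ //; last exact (X_sub HX (ss_scale HX _ Xy) Xz).
  have := ler_wpM2l (ltW r0) (bound _ _ (graphZ (- s)^-1 Gyv)).2.
  by rewrite mulrBr mulrA mulfV ?lt0r_neq0 // mul1r mulNr opprK.
- have -> : (fun t => y t + s * z t) = (fun t => s * (s^-1 * y t + z t)).
    by apply/funext => t; rewrite mulrDr mulrA mulfV ?gt_eqF // mul1r.
  rewrite NZ //; last exact (ss_add HX (ss_scale HX _ Xy) Xz).
  have := ler_wpM2l (ltW s_gt0) (bound _ _ (graphZ s^-1 Gyv)).1.
  by rewrite mulrDr mulrA mulfV ?gt_eqF // mul1r.
- by rewrite mul0r addr0; under eq_fun do rewrite mul0r addr0.
Qed.

End DominatedLinear.

Section HahnBanach.
Variable f : R -> R.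
Hypotheses (Xf : X f) (far1 : forall lambda : R, 1 <= N (fun t => 1 - lambda * f t)).

Definition base_graph : set ((R -> R) * R) :=
  [set p | exists a b : R, p = ((fun t => a + b * f t), a)].

(* The disjunct [G = set0] only admits the empty chain in [Zorn_bigcup]. *)
Definition extension_graph G :=
  [/\ dominated_graph G, linear_graph G & G = set0 \/ base_graph `<=` G].

Lemma base_graph_dominated : dominated_graph base_graph.
Proof.
move=> _ _ [a [b [-> ->]]].
have Xab : X (fun t => a + b * f t) := ss_add HX (X_cst HX a) (ss_scale HX b Xf).
split=> //; have [a0|a0] := eqVneq a 0.
  by rewrite {1}a0; exact: (ss_norm_ge0 HX Xab).
have -> : (fun t => a + b * f t) = (fun t => a * (1 - (- b / a) * f t)).
  by apply/funext => t; field.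
rewrite (ss_norm_scale HX); last exact (X_sub HX (ss_one HX) (ss_scale HX _ Xf)).
by apply: le_trans (ler_norm a) _; rewrite -[leLHS]mulr1 ler_wpM2l.
Qed.

Lemma base_graph_linear : linear_graph base_graph.
Proof.
move=> c _ _ _ _ [a1 [b1 [-> ->]]] [a2 [b2 [-> ->]]].
by exists (c * a1 + a2), (c * b1 + b2); congr pair; apply/funext => t; ring.
Qed.

Lemma extension_graph_bigcup (F : set (set ((R -> R) * R))) :
  F `<=` extension_graph -> total_on F subset -> extension_graph (\bigcup_(G in F) G).
Proof.
move=> FP Ftot; split.
- by move=> x v [G FG Gxv]; have [domG _ _] := FP G FG; exact: domG.
- move=> a x v y w [G1 F1 G1x] [G2 F2 G2y].
  have [G12|G21] := Ftot _ _ F1 F2.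
  + by exists G2 => //; have [_ linG _] := FP G2 F2; apply: linG => //; exact: G12.
  + by exists G1 => //; have [_ linG _] := FP G1 F1; apply: linG => //; exact: G21.
- have [[p [G FG Gp]]|F0] := pselect (\bigcup_(G in F) G !=set0).
    right; have [_ _ [G0|baseG]] := FP G FG; first by move: Gp; rewrite G0.
    by move=> q bq; exists G => //; exact: baseG.
  by left; apply/seteqP; split => // q Fq; apply: F0; exists q.
Qed.

Lemma hahn_banach_norming :
  exists psi, norming_at X N (fun _ => 1) psi /\ psi f = 0.
Proof.
have [A [[domA linA baseA] maxA]] := Zorn_bigcup extension_graph_bigcup.
have base0 : base_graph ((fun t => 0 + 0 * f t), 0) by exists 0, 0.
have {}baseA : base_graph `<=` A.
  case: baseA => // A0; exfalso; apply: (maxA base_graph).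
    by rewrite A0; split => // /(_ _ base0).
  by split; [exact: base_graph_dominated|exact: base_graph_linear|right].
have A0 : A ((fun _ => 0), 0).
  by have := baseA _ base0; under eq_fun do rewrite mul0r addr0.
have totA x : X x -> exists v, A (x, v).
  move=> Xx; apply: contrapT => noval.
  have [c bound] := graph_ext_bound domA linA A0 Xx.
  apply: (maxA (graph_ext A x c)).
    split; first exact: sub_graph_ext.
    by move=> sub; apply: noval; exists c; apply: sub; exact: graph_ext_point.
  split; [exact: graph_ext_dominated|exact: graph_ext_linear|right].
  by apply: subset_trans baseA _; exact: sub_graph_ext.
pose psi x := xget 0 [set v | A (x, v)].
have A_psi x : X x -> A (x, psi x) by move=> Xx; exact: xgetPex (totA x Xx).
exists psi; split; last first.
  apply: (graph_functional domA linA A0 (A_psi _ Xf)).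
  by apply: baseA; exists 0, 1; congr pair; apply/funext => t; rewrite add0r mul1r.
apply/(norming_at_oneP HX); split.
- move=> a x y Xx Xy; have Xaxy := ss_add HX (ss_scale HX a Xx) Xy.
  apply: (graph_functional domA linA A0 (A_psi _ Xaxy)).
  exact: linA (A_psi x Xx) (A_psi y Xy).
- by move=> x Xx; apply: (graph_abs_le domA linA A0 (A_psi x Xx)).
- apply: (graph_functional domA linA A0 (A_psi _ (ss_one HX))).
  by apply: baseA; exists 1, 0; congr pair; apply/funext => t; rewrite mul0r addr0.
Qed.

End HahnBanach.
End Graphs.

Theorem proposition4 (R : realType) (X : set (R -> R)) (N : (R -> R) -> R) :
  symmetric_space X N -> separable_space X N ->
  ((forall f, X f -> Rintegral (@lebesgue_measure R) (@I01 R) f != 0 ->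
      exists lambda0 : R, N (fun t => 1 - lambda0 * f t) < 1)
   <-> smooth_at X N (fun _ => 1)).
Proof.
move=> HX _; split=> [near1|[_ _ unique] f Xf int_f].
  split; [exact: ss_normalized HX|eexists; exact: Rintegral_norming HX|].
  move=> phi psi Nphi Npsi g Xg.
  by rewrite !(norming_at_one_eq_Rintegral HX near1).
apply: contrapT => far; have far1 lambda : 1 <= N (fun t => 1 - lambda * f t).
  by rewrite leNgt; apply/negP => lt1; apply: far; exists lambda.
have [psi [Npsi psi_f]] := hahn_banach_norming HX Xf far1.
by move: int_f; rewrite -(unique _ _ Npsi (Rintegral_norming HX) f Xf) psi_f eqxx.
Qed.
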